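(* Let $f\in L^1(\mathbb{R})$ be an even real-valued function and let $\mathcal{W}$ be a $C^1$ weak solution of $\mathcal{W}''(t)+(-1+f(t))\mathcal{W}(t)=0$ on $\mathbb{R}$ such that $\mathcal{W}(t)>0$ for all $t\ge0$ and $\lim_{t\to\infty}\mathcal{W}(t)=0$. Then no nontrivial solution of $\mathcal{Y}''+(-1+f)\mathcal{Y}=0$ vanishes at two distinct values of $t$ if and only if $\mathcal{W}'(0)\le0$.
   Context: A $C^1$ weak solution of $\mathcal{Y}''+k\mathcal{Y}=0$ with $k\in L^1_{loc}$ is a $C^1$ function $\mathcal{Y}$ with $\mathcal{Y}'$ absolutely continuous and $\mathcal{Y}''+k\mathcal{Y}=0$ almost everywhere. *)

From Stdlib Require Import Reals List.
Open Scope R_scope.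

Definition null_set (N : R -> Prop) : Prop :=
  forall eps, 0 < eps ->
    exists a b : nat -> R,
      (forall n, a n <= b n) /\
      (forall x, N x -> exists n, a n < x < b n) /\
      (forall m, sum_f_R0 (fun n => b n - a n) m <= eps).

Definition ae (P : R -> Prop) : Prop :=
  exists N, null_set N /\ forall x, ~ N x -> P x.

Definition brick (a b x : R) : R :=
  if Rle_dec a x then (if Rlt_dec x b then 1 else 0) else 0.

(* Lebesgue integrability on R (Mikusinski's definition via series of
   brick functions): f ~ sum c_n 1_[a_n,b_n) with sum |c_n|(b_n - a_n) < oo,
   and f(x) equals the series at every x where it converges absolutely. *)
Definition L1 (f : R -> R) : Prop :=
  exists c a b : nat -> R,
    (forall n, a n < b n) /\
    (exists M, forall m, sum_f_R0 (fun n => Rabs (c n) * (b n - a n)) m <= M) /\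
    (forall x,
       (exists M, forall m,
          sum_f_R0 (fun n => Rabs (c n) * brick (a n) (b n) x) m <= M) ->
       Un_cv (fun m => sum_f_R0 (fun n => c n * brick (a n) (b n) x) m) (f x)).

Fixpoint incr_intervals (lo : R) (l : list (R * R)) (hi : R) : Prop :=
  match l with
  | nil => lo <= hi
  | (x, y) :: t => lo <= x /\ x <= y /\ incr_intervals y t hi
  end.

Definition total_length (l : list (R * R)) : R :=
  fold_right (fun p s => (snd p - fst p) + s) 0 l.

Definition total_variation (g : R -> R) (l : list (R * R)) : R :=
  fold_right (fun p s => Rabs (g (snd p) - g (fst p)) + s) 0 l.

Definition abs_cont_on (g : R -> R) (a b : R) : Prop :=
  forall eps, 0 < eps -> exists delta, 0 < delta /\
    forall l, incr_intervals a l b -> total_length l < delta ->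
      total_variation g l < eps.

Definition loc_abs_cont (g : R -> R) : Prop :=
  forall a b, a <= b -> abs_cont_on g a b.

Definition C1_weak_solution (k : R -> R) (Y : R -> R) : Prop :=
  exists Y' : R -> R,
    (forall t, derivable_pt_lim Y t (Y' t)) /\
    continuity Y' /\
    loc_abs_cont Y' /\
    ae (fun t => derivable_pt_lim Y' t (- (k t * Y t))).

(* With V(t) = W(-t), evenness of f makes V a solution too, and the Wronskian
   W V' - W' V is the constant c = -2 W(0) W'(0), so the ratio V/W has
   derivative c / W^2 on [0, oo).  If W'(0) <= 0 this ratio is >= 1 there,
   hence W > 0 on all of R, and then every solution Y has (Y/W)' = c_Y / W^2:
   two zeros force c_Y = 0 and Y = 0.  If W'(0) > 0, then c < 0 and, since
   W -> 0, V/W eventually drops below -1, so the even solution W + V has zeros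
   at some z > 0 and at -z.  Constancy of Wronskians of weak solutions is the
   fact that an absolutely continuous function with derivative 0 almost
   everywhere is constant, proved by real induction over a small open cover of
   the exceptional set. *)

From Stdlib Require Import Reals List Lra Lia Classical.
Open Scope R_scope.

Lemma incr_intervals_le lo l hi : incr_intervals lo l hi -> lo <= hi.
Proof.
  revert lo; induction l as [|[x y] t IH]; simpl; intros lo H; [lra|].
  destruct H as [? [? H]]; apply IH in H; lra.
Qed.

Lemma incr_intervals_weaken lo' lo l hi hi' : lo' <= lo -> hi <= hi' ->
  incr_intervals lo l hi -> incr_intervals lo' l hi'.
Proof.
  revert lo' lo; induction l as [|[x y] t IH]; simpl; intros lo' lo H1 H2 H; [lra|].
  destruct H as [? [? H]]; split; [lra|split; [lra|]]. exact (IH y y (Rle_refl y) H2 H).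
Qed.

Lemma incr_intervals_app lo l1 mid l2 hi : incr_intervals lo l1 mid ->
  incr_intervals mid l2 hi -> incr_intervals lo (l1 ++ l2) hi.
Proof.
  revert lo; induction l1 as [|[x y] t IH]; simpl; intros lo H1 H2.
  - exact (incr_intervals_weaken lo mid l2 hi hi H1 (Rle_refl hi) H2).
  - destruct H1 as [? [? ?]]; auto.
Qed.

Lemma total_length_app l1 l2 :
  total_length (l1 ++ l2) = total_length l1 + total_length l2.
Proof. induction l1 as [|[x y] t IH]; simpl; [ring | rewrite IH; ring]. Qed.

Lemma total_variation_app g l1 l2 :
  total_variation g (l1 ++ l2) = total_variation g l1 + total_variation g l2.
Proof. induction l1 as [|[x y] t IH]; simpl; [ring | rewrite IH; ring]. Qed.

Lemma total_length_ge0 lo l hi : incr_intervals lo l hi -> 0 <= total_length l.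
Proof.
  revert lo; induction l as [|[x y] t IH]; simpl; intros lo H; [lra|].
  destruct H as [? [? H]]; specialize (IH _ H); lra.
Qed.

Lemma total_variation_ge0 g l : 0 <= total_variation g l.
Proof.
  induction l as [|[x y] t IH]; simpl; [lra|].
  pose proof (Rabs_pos (g y - g x)); lra.
Qed.

Lemma total_variation_dominated g h1 h2 C1 C2 C3 a b :
  (forall u v, a <= u -> u <= v -> v <= b ->
     Rabs (g v - g u) <= C1 * Rabs (h1 v - h1 u) + C2 * Rabs (h2 v - h2 u) + C3 * (v - u)) ->
  forall l lo, a <= lo -> incr_intervals lo l b ->
  total_variation g l <=
    C1 * total_variation h1 l + C2 * total_variation h2 l + C3 * total_length l.
Proof.
  intros H l; induction l as [|[x y] t IH]; simpl; intros lo Hlo Hl; [lra|].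
  destruct Hl as [? [? Hl]]; pose proof (incr_intervals_le _ _ _ Hl).
  specialize (IH y ltac:(lra) Hl); specialize (H x y ltac:(lra) ltac:(lra) ltac:(lra)); lra.
Qed.

Lemma mul_lt_of_lt_div C x e : 0 <= C -> 0 <= x -> x < e / (C + 1) -> C * x < e.
Proof.
  intros HC Hx H.
  apply Rle_lt_trans with ((C + 1) * x); [nra|].
  apply (Rmult_lt_compat_l (C + 1)) in H; [|lra].
  replace ((C + 1) * (e / (C + 1))) with e in H by (field; lra); exact H.
Qed.

Lemma abs_cont_on_dominated g h1 h2 C1 C2 C3 a b :
  0 <= C1 -> 0 <= C2 -> 0 <= C3 ->
  abs_cont_on h1 a b -> abs_cont_on h2 a b ->
  (forall u v, a <= u -> u <= v -> v <= b ->
     Rabs (g v - g u) <= C1 * Rabs (h1 v - h1 u) + C2 * Rabs (h2 v - h2 u) + C3 * (v - u)) ->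
  abs_cont_on g a b.
Proof.
  intros P1 P2 P3 A1 A2 H eps Heps.
  set (e := eps / 3).
  assert (He : forall C, 0 <= C -> 0 < e / (C + 1)) by
    (intros; apply Rdiv_lt_0_compat; unfold e; lra).
  destruct (A1 (e / (C1 + 1)) (He _ P1)) as [d1 [Hd1 D1]].
  destruct (A2 (e / (C2 + 1)) (He _ P2)) as [d2 [Hd2 D2]].
  set (d3 := e / (C3 + 1)).
  exists (Rmin d1 (Rmin d2 d3)); split.
  { repeat apply Rmin_pos; auto. apply He; lra. }
  intros l Hl Hlen.
  pose proof (Rmin_l d1 (Rmin d2 d3)); pose proof (Rmin_r d1 (Rmin d2 d3)).
  pose proof (Rmin_l d2 d3); pose proof (Rmin_r d2 d3).
  pose proof (mul_lt_of_lt_div C1 _ e P1 (total_variation_ge0 h1 l) (D1 l Hl ltac:(lra))).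
  pose proof (mul_lt_of_lt_div C2 _ e P2 (total_variation_ge0 h2 l) (D2 l Hl ltac:(lra))).
  pose proof (mul_lt_of_lt_div C3 _ e P3 (total_length_ge0 _ _ _ Hl) ltac:(unfold d3 in *; lra)).
  pose proof (total_variation_dominated g h1 h2 C1 C2 C3 a b H l a (Rle_refl a) Hl).
  unfold e in *; lra.
Qed.

Lemma loc_abs_cont_plus g h :
  loc_abs_cont g -> loc_abs_cont h -> loc_abs_cont (fun t => g t + h t).
Proof.
  intros Hg Hh a b Hab; apply (abs_cont_on_dominated _ g h 1 1 0); auto; try lra.
  intros u v _ _ _.
  replace (g v + h v - (g u + h u)) with ((g v - g u) + (h v - h u)) by ring.
  pose proof (Rabs_triang (g v - g u) (h v - h u)); lra.
Qed.

Definition reflect_intervals (l : list (R * R)) : list (R * R) :=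
  rev (map (fun p => (- snd p, - fst p)) l).

Lemma incr_intervals_reflect lo l hi :
  incr_intervals lo l hi -> incr_intervals (- hi) (reflect_intervals l) (- lo).
Proof.
  revert lo; induction l as [|[x y] t IH]; simpl; intros lo H; [lra|].
  destruct H as [? [? H]].
  apply (incr_intervals_app _ _ (- y)); [exact (IH _ H) | simpl; lra].
Qed.

Lemma total_length_reflect l : total_length (reflect_intervals l) = total_length l.
Proof.
  induction l as [|[x y] t IH]; [reflexivity|]; unfold reflect_intervals in *; simpl.
  rewrite total_length_app, IH; simpl; ring.
Qed.

Lemma total_variation_reflect g l :
  total_variation g (reflect_intervals l) = total_variation (fun t => - g (- t)) l.
Proof.
  induction l as [|[x y] t IH]; [reflexivity|]; unfold reflect_intervals in *; simpl.
  rewrite total_variation_app, IH; simpl.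
  replace (- g (- y) - - g (- x)) with (g (- x) - g (- y)) by ring; ring.
Qed.

Lemma loc_abs_cont_reflect g : loc_abs_cont g -> loc_abs_cont (fun t => - g (- t)).
Proof.
  intros H a b Hab eps He.
  destruct (H (- b) (- a) ltac:(lra) eps He) as [d [Hd D]].
  exists d; split; [exact Hd|]; intros l Hl Hlen.
  rewrite <- total_variation_reflect; apply D.
  - exact (incr_intervals_reflect _ _ _ Hl).
  - rewrite total_length_reflect; exact Hlen.
Qed.

Definition interleave (x y : nat -> R) (n : nat) : R :=
  if Nat.even n then x (Nat.div2 n) else y (Nat.div2 n).

Lemma interleave_even x y k : interleave x y (2 * k) = x k.
Proof. unfold interleave; rewrite Nat.even_mul, Nat.div2_double; reflexivity. Qed.

Lemma interleave_odd x y k : interleave x y (S (2 * k)) = y k.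
Proof.
  unfold interleave; rewrite Nat.even_succ, Nat.odd_mul, Nat.div2_succ_double; reflexivity.
Qed.

Lemma sum_interleave x y k :
  sum_f_R0 (interleave x y) (S (2 * k)) = sum_f_R0 x k + sum_f_R0 y k.
Proof.
  induction k as [|k IH]; [reflexivity|].
  replace (S (2 * S k)) with (S (S (S (2 * k)))) by lia.
  change (sum_f_R0 (interleave x y) (S (S (S (2 * k))))) with
    (sum_f_R0 (interleave x y) (S (2 * k)) + interleave x y (S (S (2 * k)))
     + interleave x y (S (S (S (2 * k))))).
  rewrite IH; replace (S (S (2 * k))) with (2 * S k)%nat by lia.
  rewrite interleave_even, interleave_odd; simpl; ring.
Qed.

Lemma sum_f_R0_le_nonneg (t : nat -> R) m m' :
  (forall n, 0 <= t n) -> (m <= m')%nat -> sum_f_R0 t m <= sum_f_R0 t m'.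
Proof. intros H; induction 1; [lra|]; simpl; specialize (H (S m0)); lra. Qed.

Lemma null_setU (N1 N2 : R -> Prop) :
  null_set N1 -> null_set N2 -> null_set (fun x => N1 x \/ N2 x).
Proof.
  intros H1 H2 eps He.
  destruct (H1 (eps / 2) ltac:(lra)) as [a1 [b1 [L1 [C1 S1]]]].
  destruct (H2 (eps / 2) ltac:(lra)) as [a2 [b2 [L2 [C2 S2]]]].
  assert (L : forall n, interleave a1 a2 n <= interleave b1 b2 n)
    by (intro n; unfold interleave; destruct (Nat.even n); auto).
  exists (interleave a1 a2), (interleave b1 b2); split; [|split]; [exact L| |].
  - intros x [Hx|Hx].
    + destruct (C1 x Hx) as [n Hn]; exists (2 * n)%nat; rewrite !interleave_even; exact Hn.
    + destruct (C2 x Hx) as [n Hn]; exists (S (2 * n)); rewrite !interleave_odd; exact Hn.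
  - intro m.
    apply Rle_trans with
      (sum_f_R0 (fun n => interleave b1 b2 n - interleave a1 a2 n) (S (2 * m))).
    { apply sum_f_R0_le_nonneg; [intro n; specialize (L n); lra | lia]. }
    rewrite (sum_eq _ (interleave (fun n => b1 n - a1 n) (fun n => b2 n - a2 n))).
    + rewrite sum_interleave; specialize (S1 m); specialize (S2 m); lra.
    + intros i _; unfold interleave; destruct (Nat.even i); reflexivity.
Qed.

Lemma null_set_reflect (N : R -> Prop) : null_set N -> null_set (fun x => N (- x)).
Proof.
  intros H eps He; destruct (H eps He) as [a [b [L [C S]]]].
  exists (fun n => - b n), (fun n => - a n); split; [|split].
  - intro n; specialize (L n); lra.
  - intros x Hx; destruct (C _ Hx) as [n Hn]; exists n; lra.
  - intro m; rewrite (sum_eq _ (fun n => b n - a n)); auto; intros; ring.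
Qed.

Lemma ae_and (P Q : R -> Prop) : ae P -> ae Q -> ae (fun x => P x /\ Q x).
Proof.
  intros [N1 [H1 P1]] [N2 [H2 P2]].
  exists (fun x => N1 x \/ N2 x); split; [exact (null_setU _ _ H1 H2)|].
  intros x Hx; split; [apply P1 | apply P2]; tauto.
Qed.

Lemma ae_reflect (P : R -> Prop) : ae P -> ae (fun x => P (- x)).
Proof.
  intros [N [HN HP]]; exists (fun x => N (- x)); split; [exact (null_set_reflect _ HN)|].
  intros x Hx; exact (HP _ Hx).
Qed.

Lemma ae_impl (P Q : R -> Prop) : ae P -> (forall x, P x -> Q x) -> ae Q.
Proof. intros [N [HN HP]] H; exists N; split; auto. Qed.

Lemma gauge_induction (P : R -> Prop) a b : a <= b -> P a ->
  (forall s, exists d, 0 < d /\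
     forall x y, s - d < x -> x <= s -> s <= y -> y < s + d -> P x -> P y) ->
  P b.
Proof.
  intros Hab Pa Hstep.
  set (E := fun x => a <= x <= b /\ P x).
  destruct (completeness E) as [s [Hub Hlub]].
  { exists b; intros x [? ?]; lra. }
  { exists a; split; [lra | exact Pa]. }
  assert (Has : a <= s) by (apply Hub; split; [lra | exact Pa]).
  assert (Hsb : s <= b) by (apply Hlub; intros x [? ?]; lra).
  destruct (Hstep s) as [d [Hd G]].
  assert (Hx : exists x, E x /\ s - d < x).
  { apply NNPP; intro C; assert (s <= s - d); [|lra].
    apply Hlub; intros x Ex; apply Rnot_lt_le; intro; apply C; exists x; auto. }
  destruct Hx as [x [[Hx Px] Hxs]].
  assert (x <= s) by (apply Hub; split; auto).
  destruct (Req_dec s b) as [<-|Hsb'].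
  - apply (G x s); auto; lra.
  - pose proof (Rmin_l b (s + d / 2)); pose proof (Rmin_r b (s + d / 2)).
    assert (Hy : s < Rmin b (s + d / 2)) by (apply Rmin_glb_lt; lra).
    assert (Ey : E (Rmin b (s + d / 2))) by (split; [lra | apply (G x); auto; lra]).
    specialize (Hub _ Ey); lra.
Qed.

Definition covered_length (a b x : R) : R := Rmax 0 (Rmin b x - a).

Definition cover_length (an bn : nat -> R) (x : R) (K : nat) : R :=
  sum_f_R0 (fun n => covered_length (an n) (bn n) x) K.

Lemma covered_length_ge0 a b x : 0 <= covered_length a b x.
Proof. apply Rmax_l. Qed.

Lemma covered_length_le a b x : a <= b -> covered_length a b x <= b - a.
Proof. intros; apply Rmax_lub; [lra|]; pose proof (Rmin_l b x); lra. Qed.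

Lemma covered_length_le_mono a b x y : x <= y -> covered_length a b x <= covered_length a b y.
Proof.
  intros; unfold covered_length; apply Rmax_lub; [apply Rmax_l|].
  eapply Rle_trans; [|apply Rmax_r]; unfold Rmin; destruct (Rle_dec b x), (Rle_dec b y); lra.
Qed.

Lemma covered_length_inside a b x y : a < x -> x <= y -> y < b ->
  covered_length a b y - covered_length a b x = y - x.
Proof.
  intros; unfold covered_length; rewrite !Rmin_right, !Rmax_right by lra; ring.
Qed.

Lemma cover_length_le_mono an bn x y K : x <= y -> cover_length an bn x K <= cover_length an bn y K.
Proof.
  intros Hxy; unfold cover_length; induction K; simpl; [apply covered_length_le_mono; auto|].
  pose proof (covered_length_le_mono (an (S K)) (bn (S K)) x y Hxy); lra.
Qed.

Lemma cover_length_le an bn x K : (forall n, an n <= bn n) ->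
  cover_length an bn x K <= sum_f_R0 (fun n => bn n - an n) K.
Proof.
  intros H; unfold cover_length; induction K; simpl; [apply covered_length_le; auto|].
  pose proof (covered_length_le (an (S K)) (bn (S K)) x (H _)); lra.
Qed.

Lemma cover_length_grow an bn x y K m : (m <= K)%nat -> x <= y ->
  cover_length an bn x K + (covered_length (an m) (bn m) y - covered_length (an m) (bn m) x)
  <= cover_length an bn y K.
Proof.
  intros Hm Hxy; unfold cover_length; induction K; simpl.
  - replace m with 0%nat by lia; lra.
  - pose proof (covered_length_le_mono (an (S K)) (bn (S K)) x y Hxy).
    destruct (Nat.eq_dec m (S K)) as [->|NE].
    + pose proof (cover_length_le_mono an bn x y K Hxy); unfold cover_length in *; lra.
    + specialize (IHK ltac:(lia)); lra.
Qed.

Lemma cover_length_le_max an bn x K K' :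
  (K <= K')%nat -> cover_length an bn x K <= cover_length an bn x K'.
Proof.
  intros; apply sum_f_R0_le_nonneg; auto; intro; apply covered_length_ge0.
Qed.

(* Invariant of the real induction: up to x, the increase of g is at most
   eps (x - a) plus the variation of g over intervals each lying inside one
   cover interval; truncating the cover intervals at x bounds the total length
   of that family by the total length of the cover. *)
Section CoverControl.
Variables (g : R -> R) (N : R -> Prop) (a eps : R) (an bn : nat -> R).
Hypothesis Heps : 0 < eps.
Hypothesis Hcov : forall x, N x -> exists n, an n < x < bn n.
Hypothesis Hder : forall x, ~ N x -> derivable_pt_lim g x 0.

Definition cover_controlled (x : R) : Prop :=
  exists l K, incr_intervals a l x /\ total_length l <= cover_length an bn x K /\
    Rabs (g x - g a) <= eps * (x - a) + total_variation g l.

Lemma cover_controlled_start : cover_controlled a.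
Proof.
  exists nil, 0%nat; simpl; split; [lra | split]; [apply covered_length_ge0|].
  rewrite Rminus_diag, Rabs_R0; lra.
Qed.

Lemma small_increment_of_deriv0 x :
  derivable_pt_lim g x 0 -> exists d, 0 < d /\
    forall h, Rabs h < d -> Rabs (g (x + h) - g x) <= eps * Rabs h.
Proof.
  intros Hx; destruct (Hx eps Heps) as [d Hd]; exists d; split; [apply cond_pos|].
  intros h Hh; destruct (Req_dec h 0) as [->|NZ].
  - rewrite Rplus_0_r, Rminus_diag, Rabs_R0; lra.
  - specialize (Hd h NZ Hh); rewrite Rminus_0_r in Hd; unfold Rdiv in Hd.
    rewrite Rabs_mult, Rabs_inv in Hd; pose proof (Rabs_pos_lt h NZ).
    apply (Rmult_lt_compat_r (Rabs h)) in Hd; auto.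
    rewrite Rmult_assoc, Rinv_l in Hd by lra; lra.
Qed.

Lemma cover_controlled_step s : exists d, 0 < d /\
  forall x y, s - d < x -> x <= s -> s <= y -> y < s + d ->
  cover_controlled x -> cover_controlled y.
Proof.
  destruct (classic (N s)) as [Ns | nNs].
  - destruct (Hcov s Ns) as [m Hm].
    exists (Rmin (s - an m) (bn m - s)); split; [apply Rmin_pos; lra|].
    intros x y H1 H2 H3 H4 [l [K [Hl [HL HV]]]].
    pose proof (Rmin_l (s - an m) (bn m - s)); pose proof (Rmin_r (s - an m) (bn m - s)).
    exists (l ++ (x, y) :: nil), (Nat.max K m); split; [|split].
    + apply (incr_intervals_app _ _ x); [exact Hl | simpl; lra].
    + rewrite total_length_app; simpl.
      pose proof (cover_length_grow an bn x y (Nat.max K m) m ltac:(lia) ltac:(lra)).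
      pose proof (covered_length_inside (an m) (bn m) x y ltac:(lra) ltac:(lra) ltac:(lra)).
      pose proof (cover_length_le_max an bn x K (Nat.max K m) ltac:(lia)); lra.
    + rewrite total_variation_app; simpl.
      pose proof (Rabs_triang (g y - g x) (g x - g a)).
      replace (g y - g x + (g x - g a)) with (g y - g a) in H5 by ring; nra.
  - destruct (small_increment_of_deriv0 s (Hder s nNs)) as [d [Hd K]].
    exists d; split; [exact Hd|].
    intros x y H1 H2 H3 H4 [l [K' [Hl [HL HV]]]].
    exists l, K'; split; [|split].
    + exact (incr_intervals_weaken a a l x y (Rle_refl a) ltac:(lra) Hl).
    + pose proof (cover_length_le_mono an bn x y K' ltac:(lra)); lra.
    + pose proof (K (y - s) ltac:(rewrite Rabs_right; lra)) as Ky.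
      pose proof (K (x - s) ltac:(rewrite Rabs_left1; lra)) as Kx.
      replace (s + (y - s)) with y in Ky by ring.
      replace (s + (x - s)) with x in Kx by ring.
      rewrite (Rabs_right (y - s)) in Ky by lra; rewrite (Rabs_left1 (x - s)) in Kx by lra.
      rewrite <- Rabs_Ropp in Kx; replace (- (g x - g s)) with (g s - g x) in Kx by ring.
      pose proof (Rabs_triang (g y - g s) (g s - g a)) as T1.
      pose proof (Rabs_triang (g s - g x) (g x - g a)) as T2.
      replace (g y - g s + (g s - g a)) with (g y - g a) in T1 by ring.
      replace (g s - g x + (g x - g a)) with (g s - g a) in T2 by ring; lra.
Qed.

End CoverControl.

Lemma abs_cont_on_ae_deriv0_eq g a b : a <= b -> abs_cont_on g a b ->
  ae (fun x => derivable_pt_lim g x 0) -> g b = g a.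
Proof.
  intros Hab Hac [N [HN Hder]]; apply NNPP; intro NE.
  set (D := Rabs (g b - g a)).
  assert (HD : 0 < D) by (apply Rabs_pos_lt; intro; apply NE; lra).
  destruct (Hac (D / 2) ltac:(lra)) as [d [Hd Hdd]].
  destruct (HN (d / 2) ltac:(lra)) as [an [bn [Hle [Hcov Hsum]]]].
  set (eps := D / (4 * (b - a + 1))).
  assert (Heps : 0 < eps) by (apply Rdiv_lt_0_compat; lra).
  destruct (gauge_induction (cover_controlled g a eps an bn) a b Hab
              (cover_controlled_start g a eps an bn)
              (cover_controlled_step g N a eps an bn Heps Hcov Hder))
    as [l [K [Hl [HL HV]]]].
  pose proof (cover_length_le an bn b K Hle); specialize (Hsum K).
  specialize (Hdd l Hl ltac:(lra)).
  assert (eps * (b - a) <= D / 4).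
  { apply Rle_trans with (eps * (b - a + 1)); [apply Rmult_le_compat_l; lra|].
    right; unfold eps; field; lra. }
  fold D in HV; lra.
Qed.

Lemma derivable_pt_lim_eq f x l l' : derivable_pt_lim f x l -> l = l' -> derivable_pt_lim f x l'.
Proof. now intros H <-. Qed.

Lemma derivable_pt_lim_reflect f x l :
  derivable_pt_lim f (- x) l -> derivable_pt_lim (fun t => f (- t)) x (- l).
Proof.
  intros H.
  apply (derivable_pt_lim_eq _ _ _ _ (derivable_pt_lim_comp (fun t => - t) f x (-1) l
           (derivable_pt_lim_opp id x 1 (derivable_pt_lim_id x)) H)); ring.
Qed.

Lemma continuity_reflect g : continuity g -> continuity (fun t => - g (- t)).
Proof.
  intros Hg; apply (continuity_opp (fun t => g (- t))).
  apply (continuity_comp (fun t => - t) g); [|exact Hg].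
  apply (continuity_opp id), derivable_continuous, derivable_id.
Qed.

Lemma abs_le_on_compact f a b : a <= b -> continuity f ->
  exists M, 0 <= M /\ forall x, a <= x <= b -> Rabs (f x) <= M.
Proof.
  intros Hab Hc.
  destruct (continuity_ab_maj (fun x => Rabs (f x)) a b Hab) as [m [Hm _]].
  { intros c _; apply (continuity_pt_comp f Rabs); [apply Hc | apply Rcontinuity_abs]. }
  exists (Rabs (f m)); split; [apply Rabs_pos | exact Hm].
Qed.

Lemma Rabs_diff_le_of_deriv_bound Y Y' a b M : (forall t, derivable_pt_lim Y t (Y' t)) ->
  (forall x, a <= x <= b -> Rabs (Y' x) <= M) ->
  forall u v, a <= u -> u <= v -> v <= b -> Rabs (Y v - Y u) <= M * (v - u).
Proof.
  intros HY HM u v Hu Huv Hv; destruct (Req_dec u v) as [->|NE].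
  - rewrite Rminus_diag, Rabs_R0; lra.
  - destruct (MVT_cor2 Y Y' u v ltac:(lra) (fun c _ => HY c)) as [c [Hc Hc2]].
    rewrite Hc, Rabs_mult, (Rabs_right (v - u)) by lra.
    apply Rmult_le_compat_r; [lra | apply HM; lra].
Qed.

Lemma MVT_unordered h D a b : (forall x, derivable_pt_lim h x (D x)) ->
  exists xi, h b - h a = D xi * (b - a).
Proof.
  intros H; destruct (Rtotal_order a b) as [Hl|[->|Hg]].
  - destruct (MVT_cor2 h D a b Hl (fun c _ => H c)) as [c [Hc _]]; eauto.
  - exists b; ring.
  - destruct (MVT_cor2 h D b a Hg (fun c _ => H c)) as [c [Hc _]]; exists c.
    replace (h b - h a) with (- (h a - h b)) by ring; rewrite Hc; ring.
Qed.

Definition weak_solution_with (k Y Y' : R -> R) : Prop :=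
  (forall t, derivable_pt_lim Y t (Y' t)) /\ continuity Y' /\ loc_abs_cont Y' /\
  ae (fun t => derivable_pt_lim Y' t (- (k t * Y t))).

Lemma weak_solution_with_plus k Y Y' Z Z' :
  weak_solution_with k Y Y' -> weak_solution_with k Z Z' ->
  weak_solution_with k (fun t => Y t + Z t) (fun t => Y' t + Z' t).
Proof.
  intros [dY [cY [aY eY]]] [dZ [cZ [aZ eZ]]]; split; [|split; [|split]].
  - intro t; exact (derivable_pt_lim_plus Y Z t _ _ (dY t) (dZ t)).
  - exact (continuity_plus Y' Z' cY cZ).
  - exact (loc_abs_cont_plus Y' Z' aY aZ).
  - apply (ae_impl _ _ (ae_and _ _ eY eZ)); intros t [HY HZ].
    apply (derivable_pt_lim_eq _ _ _ _ (derivable_pt_lim_plus Y' Z' t _ _ HY HZ)); ring.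
Qed.

Lemma weak_solution_with_reflect k Y Y' : (forall t, k (- t) = k t) ->
  weak_solution_with k Y Y' ->
  weak_solution_with k (fun t => Y (- t)) (fun t => - Y' (- t)).
Proof.
  intros Hk [dY [cY [aY eY]]]; split; [|split; [|split]].
  - intro t; exact (derivable_pt_lim_reflect Y t _ (dY (- t))).
  - exact (continuity_reflect Y' cY).
  - exact (loc_abs_cont_reflect Y' aY).
  - apply (ae_impl _ _ (ae_reflect _ eY)); intros t Ht.
    apply (derivable_pt_lim_eq _ _ _ _
             (derivable_pt_lim_opp _ _ _ (derivable_pt_lim_reflect Y' t _ Ht))).
    rewrite Hk; ring.
Qed.

Definition wronskian (Y Y' Z Z' : R -> R) (t : R) : R := Y t * Z' t - Y' t * Z t.

Lemma wronskian_abs_cont_on Y Y' Z Z' a b : a <= b ->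
  (forall t, derivable_pt_lim Y t (Y' t)) -> (forall t, derivable_pt_lim Z t (Z' t)) ->
  continuity Y' -> continuity Z' -> loc_abs_cont Y' -> loc_abs_cont Z' ->
  abs_cont_on (wronskian Y Y' Z Z') a b.
Proof.
  intros Hab dY dZ cY cZ aY aZ.
  pose proof (fun t => derivable_continuous_pt Y t (exist _ _ (dY t))) as cY0.
  pose proof (fun t => derivable_continuous_pt Z t (exist _ _ (dZ t))) as cZ0.
  destruct (abs_le_on_compact Y a b Hab cY0) as [M1 [P1 B1]].
  destruct (abs_le_on_compact Z a b Hab cZ0) as [M2 [P2 B2]].
  destruct (abs_le_on_compact Y' a b Hab cY) as [M3 [P3 B3]].
  destruct (abs_le_on_compact Z' a b Hab cZ) as [M4 [P4 B4]].
  set (M := M1 + M2 + M3 + M4).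
  assert (PM : 0 <= M) by (unfold M; lra).
  assert (BM : forall x, a <= x <= b ->
    Rabs (Y x) <= M /\ Rabs (Z x) <= M /\ Rabs (Y' x) <= M /\ Rabs (Z' x) <= M).
  { intros x Hx; specialize (B1 x Hx); specialize (B2 x Hx); specialize (B3 x Hx);
      specialize (B4 x Hx); unfold M; repeat split; lra. }
  apply (abs_cont_on_dominated _ Z' Y' M M (2 * (M * M))); auto; try nra.
  intros u v Hu Huv Hv.
  destruct (BM u ltac:(lra)) as [_ [_ [BY'u BZ'u]]].
  destruct (BM v ltac:(lra)) as [BYv [BZv _]].
  pose proof (Rabs_diff_le_of_deriv_bound Y Y' a b M dY (fun x Hx => proj1 (proj2 (proj2 (BM x Hx))))
                u v Hu Huv Hv) as LY.
  pose proof (Rabs_diff_le_of_deriv_bound Z Z' a b M dZ (fun x Hx => proj2 (proj2 (proj2 (BM x Hx))))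
                u v Hu Huv Hv) as LZ.
  unfold wronskian.
  replace (Y v * Z' v - Y' v * Z v - (Y u * Z' u - Y' u * Z u)) with
    (Y v * (Z' v - Z' u) + Z' u * (Y v - Y u) + - (Z v * (Y' v - Y' u))
     + - (Y' u * (Z v - Z u)))
    by ring.
  assert (Hprod : forall p q, Rabs p <= M -> Rabs (p * q) <= M * Rabs q)
    by (intros p q Hp; rewrite Rabs_mult; apply Rmult_le_compat_r; [apply Rabs_pos | exact Hp]).
  pose proof (Hprod _ (Z' v - Z' u) BYv); pose proof (Hprod _ (Y v - Y u) BZ'u).
  pose proof (Hprod _ (Y' v - Y' u) BZv); pose proof (Hprod _ (Z v - Z u) BY'u).
  pose proof (Rmult_le_compat_l M _ _ PM LY); pose proof (Rmult_le_compat_l M _ _ PM LZ).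
  pose proof (Rabs_triang (Y v * (Z' v - Z' u) + Z' u * (Y v - Y u) + - (Z v * (Y' v - Y' u)))
                          (- (Y' u * (Z v - Z u)))).
  pose proof (Rabs_triang (Y v * (Z' v - Z' u) + Z' u * (Y v - Y u))
                          (- (Z v * (Y' v - Y' u)))).
  pose proof (Rabs_triang (Y v * (Z' v - Z' u)) (Z' u * (Y v - Y u))).
  rewrite !Rabs_Ropp in *.
  assert (M * (M * (v - u)) = M * M * (v - u)) by ring; lra.
Qed.

Lemma wronskian_const k Y Y' Z Z' :
  weak_solution_with k Y Y' -> weak_solution_with k Z Z' ->
  forall s t, wronskian Y Y' Z Z' s = wronskian Y Y' Z Z' t.
Proof.
  intros [dY [cY [aY eY]]] [dZ [cZ [aZ eZ]]].
  assert (H : forall a b, a <= b -> wronskian Y Y' Z Z' b = wronskian Y Y' Z Z' a).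
  { intros a b Hab; apply abs_cont_on_ae_deriv0_eq; [exact Hab | |].
    - exact (wronskian_abs_cont_on Y Y' Z Z' a b Hab dY dZ cY cZ aY aZ).
    - apply (ae_impl _ _ (ae_and _ _ eY eZ)); intros t [HY HZ].
      apply (derivable_pt_lim_eq _ _ _ _ (derivable_pt_lim_minus (Y * Z')%F (Y' * Z)%F t _ _
         (derivable_pt_lim_mult Y Z' t _ _ (dY t) HZ)
         (derivable_pt_lim_mult Y' Z t _ _ HY (dZ t)))); ring. }
  intros s t; destruct (Rle_dec s t); [symmetry|]; apply H; lra.
Qed.

Lemma derivable_pt_lim_ratio Y Y' Z Z' t :
  (forall t, derivable_pt_lim Y t (Y' t)) -> (forall t, derivable_pt_lim Z t (Z' t)) ->
  Y t <> 0 -> derivable_pt_lim (fun s => Z s / Y s) t (wronskian Y Y' Z Z' t / (Y t)²).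
Proof.
  intros dY dZ Ht.
  apply (derivable_pt_lim_eq _ _ _ _ (derivable_pt_lim_div Z Y t _ _ (dZ t) (dY t) Ht)).
  unfold wronskian, Rdiv; ring.
Qed.

Lemma weak_solution_zero_of_two_zeros k W W' Y Y' :
  weak_solution_with k W W' -> (forall t, 0 < W t) -> weak_solution_with k Y Y' ->
  forall t1 t2, t1 <> t2 -> Y t1 = 0 -> Y t2 = 0 -> forall t, Y t = 0.
Proof.
  intros HW Wpos HY t1 t2 Hne Y1 Y2 t.
  set (c := wronskian W W' Y Y' 0).
  assert (dr : forall s, derivable_pt_lim (fun s => Y s / W s) s (c / (W s)²)).
  { intro s; unfold c; rewrite <- (wronskian_const k W W' Y Y' HW HY s 0).
    apply derivable_pt_lim_ratio; [apply HW | apply HY | specialize (Wpos s); lra]. }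
  assert (Wsq : forall s, 0 < / (W s)²)
    by (intro s; apply Rinv_0_lt_compat, Rsqr_pos_lt; specialize (Wpos s); lra).
  destruct (MVT_unordered _ _ t1 t2 dr) as [xi Hxi].
  rewrite Y1, Y2 in Hxi; unfold Rdiv in Hxi.
  assert (Hc : c = 0).
  { specialize (Wsq xi); assert (Hm : c * / (W xi)² * (t2 - t1) = 0) by lra.
    apply Rmult_integral in Hm; destruct Hm as [Hm|Hm]; [|lra].
    apply Rmult_integral in Hm; destruct Hm; lra. }
  destruct (MVT_unordered _ _ t1 t dr) as [xi' Hxi'].
  rewrite Y1, Hc in Hxi'; unfold Rdiv in Hxi'.
  assert (Hr : Y t * / W t = 0) by lra.
  specialize (Wpos t); apply Rmult_integral in Hr; destruct Hr as [Hr|Hr]; [exact Hr|].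
  pose proof (Rinv_neq_0_compat (W t) ltac:(lra)); contradiction.
Qed.

Section EvenPotential.
Variables (k W W' : R -> R).
Hypothesis k_even : forall t, k (- t) = k t.
Hypothesis W_sol : weak_solution_with k W W'.
Hypothesis W_pos : forall t, 0 <= t -> 0 < W t.

Let V (t : R) : R := W (- t).
Let V' (t : R) : R := - W' (- t).
Let q (t : R) : R := V t / W t.

Lemma V_sol : weak_solution_with k V V'.
Proof. exact (weak_solution_with_reflect k W W' k_even W_sol). Qed.

Lemma q_zero : q 0 = 1.
Proof. unfold q, V; rewrite Ropp_0; field; specialize (W_pos 0); lra. Qed.

Lemma q_MVT a b : 0 <= a -> a < b ->
  exists xi, a < xi < b /\ q b - q a = - 2 * W 0 * W' 0 / (W xi)² * (b - a).
Proof.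
  intros Ha Hab.
  destruct (MVT_cor2 q (fun t => - 2 * W 0 * W' 0 / (W t)²) a b Hab) as [xi [H1 H2]].
  - intros t Ht.
    replace (- 2 * W 0 * W' 0) with (wronskian W W' V V' t).
    + apply derivable_pt_lim_ratio; [apply W_sol | apply V_sol | specialize (W_pos t); lra].
    + rewrite (wronskian_const k W W' V V' W_sol V_sol t 0); unfold wronskian, V, V'.
      rewrite Ropp_0; ring.
  - exists xi; auto.
Qed.

Lemma W_pos_of_slope_nonpos : W' 0 <= 0 -> forall t, 0 < W t.
Proof.
  intros Hd t; destruct (Rle_dec 0 t) as [Ht|Ht]; [exact (W_pos t Ht)|].
  destruct (q_MVT 0 (- t) (Rle_refl 0) ltac:(lra)) as [xi [Hxi Hq]].
  assert (0 <= - 2 * W 0 * W' 0 / (W xi)²).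
  { unfold Rdiv; apply Rmult_le_pos; [specialize (W_pos 0); nra|].
    apply Rlt_le, Rinv_0_lt_compat, Rsqr_pos_lt; specialize (W_pos xi); lra. }
  assert (Hq1 : 1 <= q (- t)) by (rewrite q_zero in Hq; nra).
  pose proof (W_pos (- t) ltac:(lra)).
  unfold q, V in Hq1; rewrite Ropp_involutive in Hq1.
  apply (Rmult_le_compat_r (W (- t))) in Hq1; [|lra].
  unfold Rdiv in Hq1; rewrite Rmult_assoc, Rinv_l in Hq1 by lra; lra.
Qed.

(* With c = -2 W(0) W'(0) < 0 the ratio q has slope c / W^2 <= c once W < 1,
   so it drops by 2 over any interval of length 2 / (- c) beyond that point. *)
Lemma q_le_neg1 : 0 < W' 0 ->
  (forall eps, 0 < eps -> exists T, forall t, T <= t -> Rabs (W t) < eps) ->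
  exists T, 0 < T /\ q T <= -1.
Proof.
  intros Hd Wlim; set (c := - 2 * W 0 * W' 0).
  assert (Hc : c < 0) by (unfold c; specialize (W_pos 0); nra).
  destruct (Wlim 1 ltac:(lra)) as [T HT].
  set (T0 := Rmax T 0); set (h := 2 / (- c)).
  pose proof (Rmax_l T 0); pose proof (Rmax_r T 0); fold T0 in H, H0.
  assert (Hh : c * h = -2) by (unfold h; field; lra).
  assert (Hh0 : 0 < h) by (unfold h; apply Rdiv_lt_0_compat; lra).
  assert (qT0 : q T0 <= 1).
  { destruct (Req_dec T0 0) as [->|NE]; [rewrite q_zero; lra|].
    destruct (q_MVT 0 T0 (Rle_refl 0) ltac:(lra)) as [xi [Hxi Hq]].
    assert (c / (W xi)² <= 0).
    { assert (0 < / (W xi)²)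
        by (apply Rinv_0_lt_compat, Rsqr_pos_lt; specialize (W_pos xi); lra).
      unfold Rdiv; nra. }
    fold c in Hq; rewrite q_zero in Hq; nra. }
  exists (T0 + h); split; [lra|].
  destruct (q_MVT T0 (T0 + h) H0 ltac:(lra)) as [xi [Hxi Hq]]; fold c in Hq.
  pose proof (HT xi ltac:(lra)) as Hb; pose proof (W_pos xi ltac:(lra)) as Hp.
  rewrite Rabs_right in Hb by lra.
  assert (Hs : 0 < (W xi)² < 1) by (unfold Rsqr; split; nra).
  assert (c / (W xi)² <= c).
  { apply (Rmult_le_reg_r ((W xi)²)); [lra|].
    unfold Rdiv; rewrite Rmult_assoc, Rinv_l by lra; nra. }
  replace (T0 + h - T0) with h in Hq by ring; nra.
Qed.

Lemma reflect_sum_has_positive_zero : 0 < W' 0 ->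
  (forall eps, 0 < eps -> exists T, forall t, T <= t -> Rabs (W t) < eps) ->
  exists z, 0 < z /\ W z + W (- z) = 0.
Proof.
  intros Hd Wlim; destruct (q_le_neg1 Hd Wlim) as [T [HT HqT]].
  set (Y := fun t => W t + V t).
  assert (Y0 : Y 0 = 2 * W 0) by (unfold Y, V; rewrite Ropp_0; ring).
  assert (YT : Y T <= 0).
  { pose proof (W_pos T ltac:(lra)); unfold q in HqT; unfold Y.
    apply (Rmult_le_compat_r (W T)) in HqT; [|lra].
    unfold Rdiv in HqT; rewrite Rmult_assoc, Rinv_l in HqT by lra; lra. }
  assert (cY : continuity Y).
  { destruct W_sol as [dW _]; destruct V_sol as [dV _].
    apply continuity_plus; intro x; apply derivable_continuous_pt;
      [exact (exist _ _ (dW x)) | exact (exist _ _ (dV x))]. }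
  pose proof (W_pos 0 (Rle_refl 0)).
  destruct (IVT_cor Y 0 T cY ltac:(lra) ltac:(rewrite Y0; nra)) as [z [Hz Yz]].
  exists z; split; [|exact Yz].
  destruct (Req_dec z 0) as [->|]; [rewrite Y0 in Yz; lra | lra].
Qed.

End EvenPotential.

Theorem proposition3p18 (f W : R -> R) :
  L1 f ->
  (forall t, f (- t) = f t) ->
  C1_weak_solution (fun t => -1 + f t) W ->
  (forall t, 0 <= t -> 0 < W t) ->
  (forall eps, 0 < eps -> exists T, forall t, T <= t -> Rabs (W t) < eps) ->
  ((forall Y : R -> R,
      C1_weak_solution (fun t => -1 + f t) Y ->
      (exists t, Y t <> 0) ->
      ~ (exists t1 t2, t1 <> t2 /\ Y t1 = 0 /\ Y t2 = 0))
   <->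
   (forall d, derivable_pt_lim W 0 d -> d <= 0)).
Proof.
  intros _ f_even [W' W_sol] W_pos W_lim.
  set (k := fun t => -1 + f t).
  assert (k_even : forall t, k (- t) = k t) by (intro t; unfold k; rewrite f_even; ring).
  assert (W'0 : forall d, derivable_pt_lim W 0 d -> d = W' 0)
    by (intros d Hd; exact (uniqueness_limite W 0 d (W' 0) Hd (proj1 W_sol 0))).
  split.
  - intros Hdisc d Hd; rewrite (W'0 d Hd); apply Rnot_lt_le; intro Hslope.
    destruct (reflect_sum_has_positive_zero k W W' k_even W_sol W_pos Hslope W_lim)
      as [z [Hz Hz0]].
    apply (Hdisc (fun t => W t + W (- t))).
    + exact (ex_intro _ _ (weak_solution_with_plus k W W' _ _ W_sol
               (weak_solution_with_reflect k W W' k_even W_sol))).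
    + exists 0; rewrite Ropp_0; specialize (W_pos 0); lra.
    + exists z, (- z); split; [lra | split; [exact Hz0 | rewrite Ropp_involutive; lra]].
  - intros Hslope Y [Y' Y_sol] [t Ht] [t1 [t2 [Hne [Y1 Y2]]]].
    pose proof (W_pos_of_slope_nonpos k W W' k_even W_sol W_pos (Hslope _ (proj1 W_sol 0)))
      as W_pos_all.
    exact (Ht (weak_solution_zero_of_two_zeros k W W' Y Y' W_sol W_pos_all Y_sol
                 t1 t2 Hne Y1 Y2 t)).
Qed.
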